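(* Let $1\le t\le n$. Let $M_t$ be the real matrix with rows and columns indexed by the nonempty subsets of $[n]$ of size at most $t$, ordered by nondecreasing size, with entries $M_t[a,b]=2^{|a\cap b|}$; for $1\le r<t$, $M_r$ is the upper-left principal submatrix of $M_t$ indexed by the sets of size at most $r$. For $t\ge2$, the Schur complement $M_t/M_{t-1}$ of $M_{t-1}$ in $M_t$ is well defined (i.e. $M_{t-1}$ is invertible) and $$M_t/M_{t-1}=I+\frac{\mathbf 1_t\mathbf 1_t^T}{\alpha_{t-1}},$$ where $\mathbf 1_t$ is the all-ones vector of length $\binom nt$ and $\alpha_k=\sum_{j=0}^k\binom nj$. For $t=1$, with the convention $M_1/M_0:=M_1$, the same formula holds, i.e. $M_1=I+\mathbf 1_1\mathbf 1_1^T$.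
   Context: For a block matrix $\begin{pmatrix}A&B\\ C&D'\end{pmatrix}$ with $A$ invertible, the Schur complement of $A$ is $D'-CA^{-1}B$. Here $M_t/M_{t-1}$ is indexed by the subsets of $[n]$ of size exactly $t$. *)

From HB Require Import structures.
From mathcomp Require Import all_boot all_order all_algebra.
Set Implicit Arguments. Unset Strict Implicit. Unset Printing Implicit Defensive.
Import Order.TTheory GRing.Theory Num.Theory.
Local Open Scope ring_scope.

Definition low_sets (n t : nat) : {set {set 'I_n}} :=
  [set a : {set 'I_n} | (0 < #|a|)%N && (#|a| <= t)%N].

Definition level_sets (n t : nat) : {set {set 'I_n}} :=
  [set a : {set 'I_n} | #|a| == t].

Definition Mblock (R : nzRingType) (n : nat) (P Q : {set {set 'I_n}})
  : 'M[R]_(#|P|, #|Q|) :=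
  \matrix_(i < #|P|, j < #|Q|)
     ((2 ^ #|(enum_val i) :&: (enum_val j)|)%N)%:R.

Definition Mt (R : nzRingType) (n t : nat) :=
  Mblock R (low_sets n t) (low_sets n t).

Definition schur (R : comUnitRingType) (p q : nat) (A : 'M[R]_p)
  (B : 'M[R]_(p, q)) (C : 'M[R]_(q, p)) (D : 'M[R]_q) : 'M[R]_q :=
  D - C *m invmx A *m B.

Definition alpha (n k : nat) : nat := (\sum_(j < k.+1) 'C(n, j))%N.

From HB Require Import structures.
From mathcomp Require Import all_boot all_order all_algebra.
From mathcomp Require Import ring.
Set Implicit Arguments. Unset Strict Implicit. Unset Printing Implicit Defensive.
Import Order.TTheory GRing.Theory Num.Theory.
Local Open Scope ring_scope.

(* Write k = t - 1 and L for the nonempty sets of size at most k.  Sorting the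
   subsets of a :&: b by size gives
     2 ^ #|a :&: b| = 1 + #{d in L | d \subset a :&: b} + #{d \subset a :&: b | #|d| > k},
   so, with Y the inclusion matrix of L (invertible by Moebius inversion) and W
   the inclusion matrix of L against the t-sets, the blocks of M_t are
   M_k = J + Y Y^T, J + Y W, J + W^T Y^T and J + W^T W + I.  The all-ones vector
   is Y v for the sign vector v_d = -(-1)^#|d|, so M_k = Y (I + v v^T) Y^T and,
   by Sherman-Morrison, the Schur complement is I + (1 - W^T v)(1 - W^T v)^T
   / (1 + #|L|).  Alternating sums over subsets give 1 - W^T v = (-1)^k 1, and
   1 + #|L| = alpha_k. *)

Section OuterProduct.
Variable R : pzSemiRingType.

Lemma mul_col_trE p q (x : 'cV[R]_p) (y : 'cV[R]_q) i j :
  (x *m y^T) i j = x i 0 * y j 0.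
Proof. by rewrite mxE big_ord1 mxE. Qed.

Lemma mul_const_col_tr p q (a b : R) :
  (const_mx a : 'cV[R]_p) *m (const_mx b : 'cV[R]_q)^T = const_mx (a * b).
Proof. by apply/matrixP => i j; rewrite mul_col_trE !mxE. Qed.

End OuterProduct.

Section SchurCongruence.
Variable R : comUnitRingType.

Lemma invmx_eq p (A A' : 'M[R]_p) : A *m A' = 1%:M -> invmx A = A'.
Proof.
move=> AA'; have [uA _] := mulmx1_unit AA'.
by rewrite -[invmx A]mulmx1 -AA' mulmxA mulVmx ?mul1mx.
Qed.

Lemma schur_congr p q (X A : 'M[R]_p) (B : 'M_(p, q)) (C : 'M_(q, p)) D :
  X \in unitmx -> A \in unitmx ->
  schur (X *m A *m X^T) (X *m B) (C *m X^T) D = schur A B C D.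
Proof.
move=> uX uA; have uXt : X^T \in unitmx by rewrite unitmx_tr.
rewrite /schur; have -> : invmx (X *m A *m X^T) = invmx X^T *m invmx A *m invmx X.
  by apply: invmx_eq; rewrite !mulmxA mulmxK // mulmxK // mulmxV.
by rewrite !mulmxA mulmxK // mulmxKV.
Qed.

End SchurCongruence.

Section SchurComplement.
Variable R : fieldType.

Lemma sherman_morrison p (v : 'cV[R]_p) s : v^T *m v = s%:M -> 1 + s != 0 ->
  (1%:M + v *m v^T) *m (1%:M - (1 + s)^-1 *: (v *m v^T)) = 1%:M.
Proof.
move=> vv s1; rewrite mulmxDl mul1mx mulmxBr mulmx1 -scalemxAr mulmxA.
rewrite -[v *m v^T *m v]mulmxA vv mul_mx_scalar -scalemxAl.
by apply/matrixP => i j; rewrite !mxE; field.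
Qed.

Lemma schur_rank_one p q (v : 'cV[R]_p) (c : 'cV_q) (H : 'M_(p, q)) E s :
  v^T *m v = s%:M -> 1 + s != 0 ->
  schur (1%:M + v *m v^T) (v *m c^T + H) (v *m c^T + H)^T
        (c *m c^T + H^T *m H + E)
  = E + (1 + s)^-1 *: ((c - H^T *m v) *m (c - H^T *m v)^T).
Proof.
move=> vv s1; rewrite /schur (invmx_eq (sherman_morrison vv s1)).
set h := H^T *m v.
have hvH : v^T *m H = h^T by rewrite trmx_mul trmxK.
have Bt : (v *m c^T + H)^T = c *m v^T + H^T by rewrite raddfD /= trmx_mul trmxK.
have Bv : (c *m v^T + H^T) *m v = s *: c + h.
  by rewrite mulmxDl -mulmxA vv mul_mx_scalar.
have BB : (c *m v^T + H^T) *m (v *m c^T + H)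
    = (s *: c) *m c^T + c *m h^T + h *m c^T + H^T *m H.
  rewrite !mulmxDl !mulmxDr !mulmxA -[c *m v^T *m v]mulmxA vv mul_mx_scalar.
  by rewrite -[c *m v^T *m H]mulmxA hvH addrA.
rewrite Bt mulmxBr mulmx1 mulmxBl -scalemxAr -scalemxAl !mulmxA.
have vB : v^T *m (v *m c^T + H) = (s *: c + h)^T.
  by rewrite -Bv -Bt trmx_mul trmxK.
rewrite Bv -mulmxA vB BB.
by apply/matrixP => i j; rewrite !(mul_col_trE, mxE); field.
Qed.

Lemma schur_gram p q (Y : 'M[R]_p) (v u : 'cV_p) (c : 'cV_q) (W : 'M_(p, q)) E s :
  Y \in unitmx -> Y *m v = u -> v^T *m v = s%:M -> 1 + s != 0 ->
  u *m u^T + Y *m Y^T \in unitmx /\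
  schur (u *m u^T + Y *m Y^T) (u *m c^T + Y *m W) (c *m u^T + W^T *m Y^T)
        (c *m c^T + W^T *m W + E)
  = E + (1 + s)^-1 *: ((c - W^T *m v) *m (c - W^T *m v)^T).
Proof.
move=> uY <- vv s1.
have [uG _] := mulmx1_unit (sherman_morrison vv s1).
have -> : Y *m v *m (Y *m v)^T + Y *m Y^T = Y *m (1%:M + v *m v^T) *m Y^T.
  by rewrite mulmxDr mulmx1 mulmxDl trmx_mul !mulmxA addrC.
have -> : Y *m v *m c^T + Y *m W = Y *m (v *m c^T + W) by rewrite mulmxDr mulmxA.
have -> : c *m (Y *m v)^T + W^T *m Y^T = (v *m c^T + W)^T *m Y^T.
  by rewrite raddfD /= mulmxDl !trmx_mul trmxK mulmxA.
by rewrite schur_congr // (schur_rank_one _ _ _ vv s1) !unitmx_mul unitmx_tr uY uG.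
Qed.

End SchurComplement.

Section SignSums.
Variables (R : comPzRingType) (T : finType).
Implicit Types a c d : {set T}.

Lemma prod_sign_interval c a d :
  \prod_i (if i \in d then (if i \in a then -1 else 0)
           else (if i \in c then 0 else 1) : R)
  = (-1) ^+ #|d| *+ ((c \subset d) && (d \subset a)).
Proof.
case: (boolP (c \subset d)) => [cd|/subsetPn[i ic nd]]; last first.
  by rewrite (bigD1 i) //= (negPf nd) ic mul0r.
case: (boolP (d \subset a)) => [da|/subsetPn[i id na]]; last first.
  by rewrite (bigD1 i) //= id (negPf na) mul0r.
rewrite (bigID (mem d)) /= [X in _ * X]big1 => [|i /negPf nd]; last first.
  by rewrite nd; apply/ifN; apply: contraFN nd => /(subsetP cd).
by rewrite mulr1 -prodr_const; apply: eq_bigr => i id; rewrite id (subsetP da).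
Qed.

Lemma sum_sign_interval c a : c \subset a ->
  \sum_(d : {set T} | (c \subset d) && (d \subset a)) (-1) ^+ #|d|
  = (-1) ^+ #|c| *+ (a == c) :> R.
Proof.
move=> ca; rewrite big_mkcond /=.
under eq_bigr => d _ do rewrite -mulrb -prod_sign_interval.
rewrite -bigA_distr.
case: eqVneq => [->|ac]; last first.
  have [i ia nc] : exists2 i, i \in a & i \notin c.
    by apply/subsetPn; rewrite eqEsubset ca andbT in ac.
  by rewrite (bigD1 i) //= ia (negPf nc) addNr mul0r.
rewrite (bigID (mem c)) /= [X in _ * X]big1 => [|i /negPf nc]; last by rewrite nc add0r.
by rewrite mulr1 -prodr_const; apply: eq_bigr => i ic; rewrite ic addr0.
Qed.

Lemma sum_sign_subset a :
  \sum_(d : {set T} | d \subset a) (-1) ^+ #|d| = (a == set0)%:R :> R.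
Proof.
have := sum_sign_interval (sub0set a); rewrite cards0 expr0 => <-.
by apply: eq_bigl => d; rewrite sub0set.
Qed.

End SignSums.

Lemma eqEcard_succ (T : finType) k (a d : {set T}) :
  #|a| = k.+1 -> (d == a) = (d \subset a) && (k < #|d|)%N.
Proof. by move=> ha; rewrite eqEcard ha. Qed.

Lemma card_low_sets n k : (#|low_sets n k| + 1)%N = alpha n k.
Proof.
have binE j : 'C(n, j) = (\sum_(A : {set 'I_n} | j == #|A|) 1)%N.
  rewrite -{1}(card_ord n) -card_draws sum1_card.
  by apply: eq_card => A; rewrite inE eq_sym.
rewrite /alpha; under eq_bigr => j _ do rewrite binE.
rewrite (exchange_big_dep xpredT) //=.
under eq_bigr => A _ do rewrite (big_ord1_eq addn (fun _ => 1%N)) ltnS.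
rewrite (bigD1 set0) //= cards0 addnC; congr (_ + _)%N.
rewrite -sum1_card big_mkcond [RHS]big_mkcond /=; apply: eq_bigr => A _.
by rewrite inE lt0n cards_eq0; case: (A == set0).
Qed.

Lemma low_sets_convex n k (a b d : {set 'I_n}) :
  a \in low_sets n k -> b \in low_sets n k -> a \subset d -> d \subset b -> d \in low_sets n k.
Proof.
rewrite !inE => /andP[a0 _] /andP[_ bk] /subset_leq_card ad /subset_leq_card db.
by rewrite (leq_trans a0 ad) (leq_trans db bk).
Qed.

Section SubsetIncidence.
Variables (R : comNzRingType) (n : nat).
Implicit Types (S T : {set {set 'I_n}}) (a b d s : {set 'I_n}) (k : nat).

Lemma sum_subset_split k (F : {set 'I_n} -> R) s :
  \sum_(d : {set 'I_n} | d \subset s) F d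
  = F set0 + \sum_(d in low_sets n k | d \subset s) F d
    + \sum_(d : {set 'I_n} | (d \subset s) && (k < #|d|)%N) F d.
Proof.
rewrite (bigD1 set0) ?sub0set //= -addrA; congr (_ + _).
rewrite (bigID (fun d => #|d| <= k)%N) /=; congr (_ + _); apply: eq_bigl => d.
  by rewrite inE lt0n cards_eq0; case: (d \subset s); rewrite ?andbT ?andbF.
by rewrite -ltnNge -andbA; case: eqP => [->|_]; rewrite ?cards0 ?andbF.
Qed.

Lemma pow2_card s : ((2 ^ #|s|)%N%:R : R) = \sum_(d : {set 'I_n} | d \subset s) 1.
Proof. by rewrite -card_powerset -sumr_const; apply: eq_bigl => d; rewrite powersetE. Qed.

Definition incl_mx S T : 'M[R]_(#|S|, #|T|) :=
  \matrix_(i < #|S|, j < #|T|) (enum_val i \subset enum_val j)%:R.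

Definition high_mx k S T : 'M[R]_(#|S|, #|T|) :=
  \matrix_(i < #|S|, j < #|T|)
    \sum_(d : {set 'I_n} | (d \subset enum_val i :&: enum_val j) && (k < #|d|)%N) 1.

Lemma mul_tr_incl_mxE k S T i j :
  ((incl_mx (low_sets n k) S)^T *m incl_mx (low_sets n k) T) i j
  = \sum_(d in low_sets n k | d \subset enum_val i :&: enum_val j) 1.
Proof.
rewrite mxE big_enum_val_cond [RHS]big_mkcond; apply: eq_bigr => l _.
by rewrite !mxE subsetI -natrM mulnb; case: (_ && _).
Qed.

Lemma Mblock_decomp k S T :
  Mblock R S T = const_mx 1 + (incl_mx (low_sets n k) S)^T *m incl_mx (low_sets n k) T
                 + high_mx k S T.
Proof.
apply/matrixP => i j.
by rewrite !(mul_tr_incl_mxE, mxE) pow2_card (sum_subset_split k).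
Qed.

Lemma high_mx_lowl k S T : (forall a, a \in S -> (#|a| <= k)%N) -> high_mx k S T = 0.
Proof.
move=> Sk; apply/matrixP => i j; rewrite !mxE big_pred0 // => d.
apply/negbTE; rewrite negb_and -leqNgt -implybE; apply/implyP => /subset_leq_card dab.
by rewrite (leq_trans dab) // (leq_trans (subset_leq_card (subsetIl _ _))) ?Sk ?enum_valP.
Qed.

Lemma high_mx_tr k S T : (high_mx k S T)^T = high_mx k T S.
Proof. by apply/matrixP => i j; rewrite !mxE setIC. Qed.

Lemma high_mx_level k S : (forall a, a \in S -> #|a| = k.+1) -> high_mx k S S = 1%:M.
Proof.
move=> Sk; apply/matrixP => i j; rewrite !mxE.
have Ski := Sk _ (enum_valP i); have Skj := Sk _ (enum_valP j).
case: eqVneq => [<-|ij].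
  by rewrite setIid (big_pred1 (enum_val i)) // => d; rewrite /= (eqEcard_succ _ Ski).
rewrite big_pred0 // => d; rewrite subsetI -andbA.
apply/and3P => -[di dj kd].
have /eqP di' : d == enum_val i by rewrite (eqEcard_succ _ Ski) di.
have /eqP dj' : d == enum_val j by rewrite (eqEcard_succ _ Skj) dj.
by move: ij; rewrite -(inj_eq enum_val_inj) -di' -dj' eqxx.
Qed.

Definition mobius_mx S : 'M[R]_#|S| :=
  \matrix_(i < #|S|, j < #|S|)
    ((-1) ^+ (#|enum_val i| + #|enum_val j|) *+ (enum_val i \subset enum_val j)).

Lemma incl_mx_mobius S :
  (forall a b d, a \in S -> b \in S -> a \subset d -> d \subset b -> d \in S) ->
  incl_mx S S *m mobius_mx S = 1%:M.
Proof.
move=> convS; apply/matrixP => i j; rewrite [RHS]mxE -(inj_eq enum_val_inj) [LHS]mxE.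
under eq_bigr => l _ do rewrite !mxE.
rewrite -(big_enum_val (fun d => (enum_val i \subset d)%:R
           * ((-1) ^+ (#|d| + #|enum_val j|) *+ (d \subset enum_val j)))) /=.
have := enum_valP i; have := enum_valP j.
move: (enum_val i) (enum_val j) => a c Sc Sa.
transitivity (\sum_(d : {set 'I_n} | (a \subset d) && (d \subset c))
                (-1) ^+ #|d| * (-1) ^+ #|c| : R).
  rewrite big_mkcond [RHS]big_mkcond; apply: eq_bigr => d _.
  case: (boolP (a \subset d)) => ad; case: (boolP (d \subset c)) => dc;
    rewrite /= ?mul0r ?mulr0n ?mulr0 ?if_same //.
  by rewrite (convS _ _ _ Sa Sc ad dc) mul1r mulr1n exprD.
have [ac|nac] := boolP (a \subset c); last first.
  rewrite big_pred0 => [|d]; last by apply: contraNF nac => /andP[]; apply: subset_trans.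
  by case: eqVneq nac => // ->; rewrite subxx.
rewrite -big_distrl /= sum_sign_interval // eq_sym.
by case: eqVneq => [->|_]; rewrite ?mulr1n -?expr2 ?sqrr_sign ?mulr0n ?mul0r.
Qed.

Lemma incl_mx_low0 S : incl_mx (low_sets n 0) S = 0.
Proof.
by apply/matrixP => i j; have := enum_valP i; rewrite inE leqn0 lt0n => /andP[/negPf->].
Qed.

Definition sign_vec S : 'cV[R]_#|S| := \col_(i < #|S|) - (-1) ^+ #|enum_val i|.

Lemma sign_vec_norm S : (sign_vec S)^T *m sign_vec S = (#|S|%:R)%:M.
Proof.
apply/matrixP => i j; rewrite !ord1 mxE [RHS]mxE eqxx mulr1n.
under eq_bigr do rewrite !mxE mulrNN -expr2 sqrr_sign.
by rewrite sumr_const card_ord.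
Qed.

Lemma incl_sign_vecE k S j : enum_val j != set0 ->
  ((incl_mx (low_sets n k) S)^T *m sign_vec (low_sets n k)) j 0
  = 1 + \sum_(d : {set 'I_n} | (d \subset enum_val j) && (k < #|d|)%N) (-1) ^+ #|d|.
Proof.
move=> nz; have := sum_subset_split k (fun d => (-1) ^+ #|d| : R) (enum_val j).
rewrite sum_sign_subset (negPf nz) cards0 expr0 big_enum_val_cond.
move/esym/eqP; rewrite addrAC addr_eq0 => /eqP->.
rewrite mxE -sumrN [RHS]big_mkcond; apply: eq_bigr => l _; rewrite !mxE.
by case: (_ \subset _); rewrite ?mul1r ?mul0r ?oppr0.
Qed.

Lemma incl_sign_vec_low k :
  (incl_mx (low_sets n k) (low_sets n k))^T *m sign_vec (low_sets n k) = const_mx 1.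
Proof.
apply/matrixP => i j; have := enum_valP i; rewrite inE => /andP[a0 ak].
rewrite ord1 incl_sign_vecE -?cards_eq0 -?lt0n // big_pred0 ?addr0 ?mxE // => d.
apply/negbTE; rewrite negb_and -leqNgt -implybE.
by apply/implyP => /subset_leq_card /leq_trans; apply.
Qed.

Lemma incl_sign_vec_level k :
  const_mx 1 - (incl_mx (low_sets n k) (level_sets n k.+1))^T *m sign_vec (low_sets n k)
  = const_mx ((-1) ^+ k).
Proof.
apply/matrixP => i j; have := enum_valP i; rewrite inE => /eqP bk.
rewrite ord1 [LHS]mxE [X in _ + X]mxE incl_sign_vecE -?cards_eq0 ?bk // mxE.
rewrite (big_pred1 (enum_val i)) => [|d]; last by rewrite /= (eqEcard_succ _ bk).
by rewrite bk exprS mulN1r mxE opprB addrC subrK.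
Qed.

Lemma Mt1E : Mt R n 1 = 1%:M + const_mx 1.
Proof.
rewrite /Mt (Mblock_decomp 0) incl_mx_low0 trmx0 mul0mx addr0 addrC high_mx_level // => a.
by rewrite inE => /andP[a0 a1]; apply/eqP; rewrite eqn_leq a1.
Qed.

End SubsetIncidence.

Lemma schur_Mt_level (R : numFieldType) n k :
  Mt R n k \in unitmx /\
  schur (Mt R n k) (Mblock R (low_sets n k) (level_sets n k.+1))
        (Mblock R (level_sets n k.+1) (low_sets n k))
        (Mblock R (level_sets n k.+1) (level_sets n k.+1))
  = 1%:M + ((alpha n k)%:R)^-1 *: const_mx 1.
Proof.
set P := low_sets n k; set Q := level_sets n k.+1.
set Y := (incl_mx R P P)^T; set W := incl_mx R P Q.
pose u : 'cV[R]_#|P| := const_mx 1; pose c : 'cV[R]_#|Q| := const_mx 1.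
have lowP a : a \in P -> (#|a| <= k)%N by rewrite inE => /andP[].
have levelQ a : a \in Q -> #|a| = k.+1 by rewrite inE => /eqP.
have uY : Y \in unitmx.
  by rewrite unitmx_tr; case/mulmx1_unit: (incl_mx_mobius R (@low_sets_convex n k)).
have AE : Mt R n k = u *m u^T + Y *m Y^T.
  by rewrite /Mt (Mblock_decomp _ k) high_mx_lowl // addr0 trmxK mul_const_col_tr mulr1.
have BE : Mblock R P Q = u *m c^T + Y *m W.
  by rewrite (Mblock_decomp _ k) high_mx_lowl // addr0 mul_const_col_tr mulr1.
have CE : Mblock R Q P = c *m u^T + W^T *m Y^T.
  rewrite (Mblock_decomp _ k) -high_mx_tr high_mx_lowl // trmx0 addr0 trmxK.
  by rewrite mul_const_col_tr mulr1.
have DE : Mblock R Q Q = c *m c^T + W^T *m W + 1%:M.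
  by rewrite (Mblock_decomp _ k) high_mx_level // mul_const_col_tr mulr1.
have alphaE : 1 + #|P|%:R = (alpha n k)%:R :> R by rewrite -card_low_sets natrD addrC.
have s1 : 1 + #|P|%:R != 0 :> R by rewrite alphaE pnatr_eq0 -card_low_sets addn1.
rewrite AE BE CE DE.
have [uA ->] := schur_gram c W 1%:M uY (incl_sign_vec_low R n k) (sign_vec_norm R P) s1.
by split=> //; rewrite incl_sign_vec_level mul_const_col_tr -expr2 sqrr_sign alphaE.
Qed.

Theorem lemma7 (R : realFieldType) (n t : nat) :
  (1 <= t)%N -> (t <= n)%N ->
  ((2 <= t)%N ->
     Mt R n t.-1 \in unitmx /\
     schur (Mt R n t.-1)
           (Mblock R (low_sets n t.-1) (level_sets n t))
           (Mblock R (level_sets n t) (low_sets n t.-1))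
           (Mblock R (level_sets n t) (level_sets n t))
     = 1%:M + ((alpha n t.-1)%:R)^-1 *: const_mx 1) /\
  (t = 1%N -> Mt R n 1 = 1%:M + const_mx 1).
Proof.
move=> t_gt0 _; split => [|_]; last exact: Mt1E.
by case: t t_gt0 => [|[|k]] // _ _; exact: schur_Mt_level.
Qed.
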